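(* Let $n,d,e,f$ be positive integers with $d\mid n$ and $\gcd(e,n/d)=1$. Then $I_{n,de}=I_{n,d}$ and $I_{n,f}=I_{n,\gcd(n,f)}$. Moreover $$I_{n,d}=\sum_{k=0}^{\lfloor d/2\rfloor}\frac{d!\,(n/d)^k\,\bigl(2-(n/d \bmod 2)\bigr)^{d-2k}}{2^k k!\,(d-2k)!},$$ and in particular $I_n=\sum_{k=0}^{\lfloor n/2\rfloor}\frac{n!}{2^k k!(n-2k)!}$.
   Context: For positive integers $n,d$ and an $n$-cycle $\zeta\in S_n$, $I_{n,d}$ is the number of $\tau\in S_n$ with $\tau^2=1$ and $\tau\zeta^d=\zeta^d\tau$ (independent of the choice of $\zeta$), and $I_n:=I_{n,n}$. Here $n\bmod 2\in\{0,1\}$ is the remainder of $n$ upon division by $2$. *)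

From mathcomp Require Import all_boot all_order all_algebra all_fingroup.
Set Implicit Arguments. Unset Strict Implicit. Unset Printing Implicit Defensive.

Definition is_ncycle (n : nat) (zeta : {perm 'I_n}) : Prop :=
  exists x : 'I_n, porbit zeta x = [set: 'I_n].

(* I_{n,d} computed w.r.t. the n-cycle zeta: number of involutions (or the
   identity) tau in S_n with tau * zeta^d = zeta^d * tau. *)
Definition Ind (n : nat) (zeta : {perm 'I_n}) (d : nat) : nat :=
  #|[set tau : {perm 'I_n} | (tau * tau == 1)%g &&
                             (tau * zeta ^+ d == zeta ^+ d * tau)%g]|.

(* Let s := zeta^d; it is a product of d disjoint cycles of length m = n/d,
   and the centralizer of s acts transitively on points.  An involution t
   commuting with s either maps the cycle of a point a to itself, where it
   agrees with one of the u = 2 - m mod 2 involutions of <[s]>, or swaps it with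
   another cycle, in one of m ways.  Multiplying by one fixed such involution w
   maps the fiber {t | t a = w a} bijectively onto the involutions supported
   off the cycles of a and w a.  Hence the counts F on k cycles satisfy
   F(k+2) = u F(k+1) + (k+1) m F(k), solved by the weighted matching numbers
   sum_j 'C(k, 2j) (2j-1)!! m^j u^(k-2j).  Finally I_{n,f} depends only on
   <[zeta^f]> = <[zeta^(gcd(n, f))]>. *)

From mathcomp Require Import all_boot all_order all_algebra all_fingroup all_solvable.
From mathcomp Require Import zify ring.
Set Implicit Arguments. Unset Strict Implicit. Unset Printing Implicit Defensive.

Import GRing.Theory Num.Theory.

Section MatchingSum.
Variables u m : nat.

Fixpoint odd_fact k := if k is k'.+1 then (2 * k').+1 * odd_fact k' else 1.

Lemma odd_fact_fact k : odd_fact k * (2 ^ k * k`!) = (2 * k)`!.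
Proof.
elim: k => [|k IHk] //=; have -> : 2 * k.+1 = (2 * k).+2 by lia.
by rewrite !factS -IHk expnS; ring.
Qed.

Definition matching_term d k := 'C(d, 2 * k) * odd_fact k * m ^ k * u ^ (d - 2 * k).

Definition matching_sum d := \sum_(k < d.+1) matching_term d k.

Lemma matching_term_small d k : d < 2 * k -> matching_term d k = 0.
Proof. by move=> ltd; rewrite /matching_term bin_small. Qed.

Lemma matching_term_rec i k :
  matching_term i.+2 k.+1 = u * matching_term i.+1 k.+1 + i.+1 * m * matching_term i k.
Proof.
rewrite /matching_term; have -> : 2 * k.+1 = (2 * k).+2 by lia.
rewrite binS mulnDl mulnDl mulnDl mulnDr; congr (_ + _).
  case: (leqP (2 * k).+2 i.+1) => ltki; last by rewrite bin_small // !mul0n muln0.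
  by rewrite subSn // (expnS u); ring.
have := mul_bin_diag i.+1 (2 * k); rewrite subSS /= => bin_diag.
have -> : 'C(i.+1, (2 * k).+1) * ((2 * k).+1 * odd_fact k) =
  (2 * k).+1 * 'C(i.+1, (2 * k).+1) * odd_fact k by ring.
by rewrite -bin_diag expnS; ring.
Qed.

Lemma matching_sum_ord d N : d./2 < N -> matching_sum d = \sum_(k < N) matching_term d k.
Proof.
suff sum_ord M : d./2 < M ->
    \sum_(k < M) matching_term d k = \sum_(k < d./2.+1) matching_term d k.
  by move=> ltN; rewrite /matching_sum !sum_ord // ltnS leq_half_double; lia.
elim: M => // M IHM; rewrite ltnS leq_eqVlt => /predU1P[<- // | ltM].
by rewrite big_ord_recr /= IHM // matching_term_small ?addn0 // mul2n -ltn_half_double.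
Qed.

Lemma matching_sum0 : matching_sum 0 = 1.
Proof. by rewrite /matching_sum big_ord1 /matching_term muln0 bin0 expn0. Qed.

Lemma matching_sum1 : matching_sum 1 = u.
Proof.
rewrite (@matching_sum_ord 1 1) // big_ord1 /matching_term.
by rewrite muln0 bin0 subn0 expn0 expn1 !mul1n.
Qed.

Lemma matching_sum_rec i :
  matching_sum i.+2 = u * matching_sum i.+1 + i.+1 * m * matching_sum i.
Proof.
have half_lt j : j./2 < j.+1 by rewrite ltnS leq_half_double; lia.
rewrite (matching_sum_ord (leqW (half_lt i.+1))) (matching_sum_ord (leqW (half_lt i))).
rewrite /matching_sum big_ord_recl [X in u * X]big_ord_recl mulnDr -addnA.
congr (_ + _); first by rewrite /matching_term !muln0 !bin0 !subn0 (expnS u); ring.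
rewrite !big_distrr -big_split /=.
by apply: eq_bigr => k _; exact: matching_term_rec.
Qed.

Lemma matching_term_fact d k : 2 * k <= d ->
  matching_term d k * (2 ^ k * k`! * (d - 2 * k)`!) = d`! * m ^ k * u ^ (d - 2 * k).
Proof.
by move=> le2kd; rewrite /matching_term -(bin_fact le2kd) -odd_fact_fact; ring.
Qed.

Lemma matching_sum_ratE d : ((matching_sum d)%:R =
  \sum_(k < (d./2).+1)
     (d`! * m ^ k * u ^ (d - 2 * k))%N%:R / (2 ^ k * k`! * (d - 2 * k)`!)%N%:R
   :> rat)%R.
Proof.
rewrite (@matching_sum_ord d d./2.+1) // natr_sum; apply: eq_bigr => k _.
have le2kd : 2 * k <= d by rewrite mul2n -geq_half_double -ltnS.
rewrite -(matching_term_fact le2kd) natrM mulfK // pnatr_eq0 -lt0n.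
by rewrite !muln_gt0 expn_gt0 !fact_gt0.
Qed.

End MatchingSum.

Local Open Scope group_scope.

Definition cycle_invol (gT : finGroupType) (s : gT) := [set h in <[s]> | h ^+ 2 == 1].

Lemma card_cycle_invol (gT : finGroupType) (s : gT) :
  #|cycle_invol s| = (2 - #[s] %% 2)%N.
Proof.
have ker_sq : cycle_invol s = <[s]> :&: 'ker (cyclem 2 s).
  by apply/setP => h; rewrite !inE andbA andbb.
have im_sq : #|<[s]> : 'ker (cyclem 2 s)| = #[s ^+ 2].
  by rewrite -{1}[<[s]>]setIid -card_morphim morphim_cycle ?cycle_id.
have := LagrangeI <[s]> ('ker (cyclem 2 s)).
rewrite -ker_sq im_sq orderXgcd -orderE -{3}(divnK (dvdn_gcdl #[s] 2)).
have q_gt0 : (0 < #[s] %/ gcdn #[s] 2)%N.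
  by rewrite divn_gt0 ?gcdn_gt0 ?order_gt0 // dvdn_leq ?order_gt0 ?dvdn_gcdl.
move/eqP; rewrite [X in _ == X]mulnC eqn_pmul2r // => /eqP ->.
by rewrite -gcdn_modl modn2; case: odd.
Qed.

Lemma cycleX_gcd (gT : finGroupType) (x : gT) k :
  <[x ^+ k]> = <[x ^+ gcdn #[x] k]>.
Proof.
apply/eqP; rewrite eqEcard cycle_subG -!orderE !orderXgcd.
rewrite (gcdn_idPr (dvdn_gcdl _ _)) leqnn andbT.
have /dvdnP[q kE] := dvdn_gcdr #[x] k.
by rewrite {1}kE mulnC expgM mem_cycle.
Qed.

Section PermOrbits.
Variables (T : finType) (s : {perm T}).
Implicit Types (g h : {perm T}) (x y : T) (U : {set T}).

Lemma commute_perm g x : commute g s -> g (s x) = s (g x).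
Proof. by move=> gs; rewrite -!permM gs. Qed.

Lemma commute_permX g : commute g s -> forall i x, g ((s ^+ i) x) = (s ^+ i) (g x).
Proof. by move=> gs i x; rewrite -!permM (commuteX i gs). Qed.

Lemma cycle_commute h : h \in <[s]> -> commute h s.
Proof. by case/cycleP=> i ->; apply: commute_sym; apply: commuteX. Qed.

Lemma porbit_commute g x : commute g s -> g @: porbit s x = porbit s (g x).
Proof.
move=> gs; apply/setP => y; apply/imsetP/porbitP => [[z /porbitP[i ->] ->]|[i ->]].
  by exists i; rewrite commute_permX.
by exists ((s ^+ i) x); rewrite ?mem_porbit ?commute_permX.
Qed.

Lemma astabs_porbit x : s \in 'N(porbit s x | 'P).
Proof.
by rewrite porbitE; apply: (subsetP (acts_orbit _ _ (subsetT _))); rewrite cycle_id.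
Qed.

Lemma porbit_sub U x : s \in 'N(U | 'P) -> x \in U -> porbit s x \subset U.
Proof. by move=> sU xU; rewrite porbitE acts_sub_orbit // cycle_subG. Qed.

Lemma disjoint_porbit x y : y \notin porbit s x -> [disjoint porbit s x & porbit s y].
Proof.
move=> yNx; apply/pred0P => z /=; apply: contraNF yNx.
by rewrite -!eq_porbit_mem => /andP[/eqP <- /eqP <-].
Qed.

End PermOrbits.

Section SwapPerm.
Variables (T : finType) (g : {perm T}) (A : {set T}).
Hypothesis disjA : [disjoint A & g @: A].

Definition swap_fun x := if x \in A then g x else if x \in g @: A then g^-1 x else x.

Lemma swap_fun_inv : involutive swap_fun.
Proof.
have gA x : x \in A -> g x \in g @: A by move=> xA; rewrite imset_f.
move=> x; rewrite {2}/swap_fun; have [xA | xNA] := boolP (x \in A).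
  by rewrite /swap_fun (disjointFl disjA (gA x xA)) gA ?permK.
have [/imsetP[z zA ->] | xNgA] := boolP (x \in g @: A).
  by rewrite permK /swap_fun zA.
by rewrite /swap_fun (negbTE xNA) (negbTE xNgA).
Qed.

Definition swap_perm := perm (inv_inj swap_fun_inv).

Lemma swap_permE : swap_perm =1 swap_fun.
Proof. exact: permE. Qed.

Lemma swap_perm_on : perm_on (A :|: g @: A) swap_perm.
Proof.
apply/subsetP => x; rewrite inE swap_permE /swap_fun !inE.
by case: (x \in A) => //; case: (x \in g @: A); rewrite ?orbT ?eqxx.
Qed.

Lemma swap_perm_sqr : swap_perm ^+ 2 = 1.
Proof. by apply/permP => x; rewrite expg2 permM perm1 !swap_permE swap_fun_inv. Qed.

End SwapPerm.

Section CentInvol.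
Variables (T : finType) (s : {perm T}).
Implicit Types (g h t w : {perm T}) (x y a : T) (U V : {set T}).

Definition cent_invol U := [set t in 'C[s] | (t ^+ 2 == 1) && perm_on U t].

Lemma cent_involP U t :
  reflect [/\ commute t s, t ^+ 2 = 1 & perm_on U t] (t \in cent_invol U).
Proof.
rewrite inE; apply: (iffP and3P) => [[/cent1P ts /eqP t2 tU] | [ts t2 tU]] //.
by split; [apply/cent1P | apply/eqP |].
Qed.

Lemma perm_sqrK t : t ^+ 2 = 1 -> involutive t.
Proof. by move=> t2 x; rewrite -permM -expg2 t2 perm1. Qed.

Lemma cent_invol0 : cent_invol set0 = [set 1].
Proof.
apply/setP => t; rewrite in_set1; apply/cent_involP/eqP => [[_ _ t0] | ->].
  by apply: perm_on_id t0 _; rewrite cards0.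
by rewrite expg1n; split; [apply: commute_sym (commute1 _) | | apply: perm_on1].
Qed.

Lemma cent_invol_eq_on U V t w a : t \in cent_invol U -> w \in cent_invol V ->
  t a = w a -> {in porbit s a :|: porbit s (w a), t =1 w}.
Proof.
case/cent_involP=> ts /perm_sqrK tK _ /cent_involP[ws /perm_sqrK wK _] ta x.
rewrite inE => /orP[] /porbitP[i ->]; rewrite !commute_permX // ?ta //.
by rewrite -{1}ta !tK wK.
Qed.

Section Fiber.
Variables (U : {set T}) (a : T) (w : {perm T}).
Let W := porbit s a :|: porbit s (w a).
Let fiber := [set t in cent_invol U | t a == w a].
Hypotheses (wW : w \in cent_invol W) (WU : W \subset U).

Lemma mulw_fiber t : t \in fiber -> t * w \in cent_invol (U :\: W).
Proof.
rewrite inE => /andP[tU /eqP ta]; have tw := cent_invol_eq_on tU wW ta.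
case/cent_involP: tU => ts t2 tU; case/cent_involP: wW => ws w2 wW'.
have wK := perm_sqrK w2; have tK := perm_sqrK t2.
have tWN x : x \notin W -> t x \notin W.
  by apply: contra => txW; rewrite -[x]tK tw // (perm_closed _ wW').
have tw_fix x : x \in W -> (t * w) x = x by move=> xW; rewrite permM tw.
have twC : commute t w.
  apply/permP => x; rewrite !permM; have [xW | xNW] := boolP (x \in W).
    by rewrite !tw ?wK ?(perm_closed _ wW').
  by rewrite !(out_perm wW') ?tWN.
apply/cent_involP; split.
- by apply: commute_sym; apply: commuteM; apply: commute_sym.
- by rewrite (expgMn _ twC) t2 w2 mulg1.
apply/subsetP => x; rewrite inE /= in_setD => twx; apply/andP; split.
  by apply: contra twx => xW; rewrite tw_fix.
by apply: contraR twx => xNU; rewrite (out_perm (perm_onM tU (subset_trans wW' WU))).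
Qed.

Lemma mulw_cent_invol b : b \in cent_invol (U :\: W) -> b * w \in fiber.
Proof.
case/cent_involP=> bs b2 bUW; case/cent_involP: wW => ws w2 wW'.
have bw : commute b w.
  by apply: perm_onC bUW wW' _; rewrite disjoints_subset setDE subsetIr.
rewrite inE permM (out_perm bUW) ?eqxx ?andbT; last by rewrite !inE porbit_id.
apply/cent_involP; split.
- by apply: commute_sym; apply: commuteM; apply: commute_sym.
- by rewrite (expgMn _ bw) b2 w2 mulg1.
by apply: perm_onM; [apply: subset_trans bUW (subsetDl _ _) | apply: subset_trans WU].
Qed.

Lemma card_cent_invol_fiber : #|fiber| = #|cent_invol (U :\: W)|.
Proof.
have winv : w^-1 = w.
  by apply/eqP; rewrite eq_invg_mul -expg2; case/cent_involP: wW => _ -> _.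
rewrite -(card_rcoset _ w); congr #|pred_of_set _|; apply/setP => b.
rewrite mem_rcoset winv; apply/idP/idP => [bw_fiber | /mulw_cent_invol //].
by rewrite -[b]mulg1 -(mulgV w) winv mulgA mulw_fiber.
Qed.
End Fiber.

Hypothesis s_free : forall h x, h \in <[s]> -> h x = x -> h = 1.

Lemma act_cycle_inj x : {in <[s]> &, injective (fun h => h x)}.
Proof.
move=> g h gs hs /= ghx; apply/eqP; rewrite eq_mulgV1; apply/eqP/(s_free (x := x)).
  by rewrite groupM ?groupV.
by rewrite permM ghx -permM mulgV perm1.
Qed.

Lemma card_porbit_free x : #|porbit s x| = #[s].
Proof. by rewrite porbit.unlock card_in_imset //; apply: act_cycle_inj. Qed.

Lemma card_fiber_porbit U a h : s \in 'N(U | 'P) -> a \in U -> h \in <[s]> ->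
  #|[set t in cent_invol U | t a == h a]| =
    ((h ^+ 2 == 1%g) * #|cent_invol (U :\: porbit s a)|)%N.
Proof.
move=> sU aU hs; have [h2 | h2N] := eqVneq (h ^+ 2) 1; last first.
  rewrite mul0n; apply/eqP; rewrite cards_eq0; apply/set0Pn => -[t].
  rewrite inE => /andP[/cent_involP[ts /perm_sqrK tK _] /eqP ta].
  case/eqP: h2N; apply: (s_free (x := a)); first by rewrite groupX.
  case/cycleP: hs ta => i -> ta.
  by rewrite expg2 permM -ta -(commute_permX ts) -ta tK.
rewrite mul1n; set O := porbit s a; set w := restr_perm O h.
have sO : s \in 'N(O | 'P) := astabs_porbit s a.
have hO : h \in 'N(O | 'P) by apply: subsetP hs; rewrite cycle_subG.
have wh : {in O, w =1 h} by move=> x; apply: restr_permE.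
have wa : w a = h a by rewrite wh ?porbit_id.
have Oha : porbit s (w a) = O by case/cycleP: hs wa => i -> ->; rewrite porbit_perm.
have wO : w \in cent_invol O.
  apply/cent_involP; split; last exact: restr_perm_on.
  - apply/permP => x; rewrite !permM; have [xO | xNO] := boolP (x \in O).
      by rewrite !wh ?(astabs_act x sO) // (commute_perm _ (cycle_commute hs)).
    by rewrite !(out_perm (restr_perm_on O h)) ?(astabs_act x sO).
  - by rewrite -morphX // h2 morph1.
rewrite -wa card_cent_invol_fiber Oha ?setUid ?porbit_sub //.
Qed.

Hypothesis cent_trans : forall x y, exists2 g, commute g s & g x = y.

Lemma card_fiber_off_porbit U a y :
  s \in 'N(U | 'P) -> a \in U -> y \in U -> y \notin porbit s a ->
  #|[set t in cent_invol U | t a == y]| =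
    #|cent_invol (U :\: (porbit s a :|: porbit s y))|.
Proof.
move=> sU aU yU yNa; have [g gs ga] := cent_trans a y; set O := porbit s a.
have gO : g @: O = porbit s y by rewrite porbit_commute // ga.
have disj : [disjoint O & g @: O] by rewrite gO disjoint_porbit.
set w := swap_perm disj.
have wa : w a = y by rewrite swap_permE /swap_fun porbit_id.
have wW : w \in cent_invol (O :|: porbit s (w a)).
  rewrite wa -gO; apply/cent_involP; split; last exact: swap_perm_on.
  - have gVs : commute g^-1 s by apply/cent1P; rewrite groupV; apply/cent1P.
    apply/permP => x; rewrite !permM !swap_permE /swap_fun gO.
    rewrite (astabs_act x (astabs_porbit s a)) (astabs_act x (astabs_porbit s y)).
    by case: ifP => _; [|case: ifP => _];
      rewrite ?(commute_perm _ gs) ?(commute_perm _ gVs).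
  - exact: swap_perm_sqr.
by rewrite -wa card_cent_invol_fiber // wa subUset !porbit_sub.
Qed.

Lemma card_cent_invol_rec U a : s \in 'N(U | 'P) -> a \in U ->
  #|cent_invol U| = (#|cycle_invol s| * #|cent_invol (U :\: porbit s a)|
    + \sum_(y in U :\: porbit s a) #|cent_invol (U :\: porbit s a :\: porbit s y)|)%N.
Proof.
move=> sU aU; rewrite -sum1_card (partition_big (fun t => t a) (mem U)) /=; last first.
  by move=> t /cent_involP[_ _ tU]; rewrite (perm_closed _ tU).
rewrite (big_setID (porbit s a)) /= (setIidPr (porbit_sub sU aU)).
congr (_ + _); last first.
  apply: eq_bigr => y /setDP[yU yNa].
  by rewrite setDDl -(card_fiber_off_porbit sU aU yU yNa) -sum1dep_card.
rewrite {1}porbit.unlock big_imset /=; last exact: act_cycle_inj.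
set c := #|cent_invol (U :\: porbit s a)|.
rewrite (eq_bigr (fun h => (h ^+ 2 == 1%g) * c)%N); last first.
  by move=> h hs; rewrite -card_fiber_porbit // -sum1dep_card.
have sum_invol : (\sum_(h in <[s]>) (h ^+ 2 == 1%g) = #|cycle_invol s|)%N.
  by rewrite -sum1dep_card big_mkcondr.
by rewrite -big_distrl /= sum_invol.
Qed.

Lemma astabsD_porbit U a : s \in 'N(U | 'P) -> s \in 'N(U :\: porbit s a | 'P).
Proof. by move=> sU; apply: (subsetP (astabsD _ _ _)); rewrite inE sU astabs_porbit. Qed.

Lemma card_setD_porbit U a : s \in 'N(U | 'P) -> a \in U ->
  #|U :\: porbit s a| = (#|U| - #[s])%N.
Proof. by move=> sU aU; rewrite cardsDS ?porbit_sub ?card_porbit_free. Qed.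

Theorem card_cent_invol k U : s \in 'N(U | 'P) -> #|U| = (k * #[s])%N ->
  #|cent_invol U| = matching_sum #|cycle_invol s| #[s] k.
Proof.
elim/ltn_ind: k U => k IHk U sU cardU.
have [U0 | [a aU]] := set_0Vmem U.
  have -> : k = 0 by move: cardU (order_gt0 s); rewrite U0 cards0; nia.
  by rewrite U0 cent_invol0 cards1 matching_sum0.
case: k IHk cardU => [|j] IHk cardU.
  by move: aU; rewrite (card0_eq cardU).
have cardUa : #|U :\: porbit s a| = (j * #[s])%N.
  by rewrite card_setD_porbit // cardU mulSn addKn.
rewrite (card_cent_invol_rec sU aU) (IHk j) ?astabsD_porbit //.
case: j IHk cardU cardUa => [|i] IHk _ cardUa.
  have -> : U :\: porbit s a = set0 by apply/eqP; rewrite -cards_eq0 cardUa.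
  by rewrite big_set0 matching_sum0 matching_sum1 muln1 addn0.
rewrite (eq_bigr (fun _ => matching_sum #|cycle_invol s| #[s] i)); last first.
  move=> y yUa; apply: IHk; rewrite ?astabsD_porbit //.
  by rewrite card_setD_porbit ?astabsD_porbit // cardUa mulSn addKn.
by rewrite sum_nat_const cardUa matching_sum_rec.
Qed.
End CentInvol.

Section NCycle.
Variables (n : nat) (zeta : {perm 'I_n}).
Hypothesis zeta_ncycle : is_ncycle zeta.

Lemma ncycle_porbit x : porbit zeta x = [set: 'I_n].
Proof.
case: zeta_ncycle => x0 zx0; rewrite -zx0; apply/eqP.
by rewrite eq_porbit_mem zx0 inE.
Qed.

Lemma ncycle_free h x : h \in <[zeta]> -> h x = x -> h = 1.
Proof.
case/cycleP => j -> hx; apply/permP => z; rewrite perm1.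
have /porbitP[i ->] : z \in porbit zeta x by rewrite ncycle_porbit inE.
by rewrite -permM -expgD addnC expgD permM hx.
Qed.

Lemma order_ncycle : #[zeta] = n.
Proof.
case: zeta_ncycle => x0 zx0.
by rewrite -(card_porbit_free ncycle_free x0) zx0 cardsT card_ord.
Qed.

Lemma Ind_cent_invol d : Ind zeta d = #|cent_invol (zeta ^+ d) [set: 'I_n]|.
Proof.
apply: eq_card => t; rewrite inE.
apply/andP/cent_involP => [[/eqP t2 /eqP tz] | [tz t2 _]]; last by rewrite -expg2 t2 tz.
by split; rewrite ?expg2 //; apply/subsetP => x; rewrite inE.
Qed.

Lemma Ind_matching_sum d : d %| n ->
  Ind zeta d = matching_sum (2 - (n %/ d) %% 2) (n %/ d) d.
Proof.
move=> dvd_dn; set s := zeta ^+ d.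
have s_free h x : h \in <[s]> -> h x = x -> h = 1.
  by move=> hs; apply: ncycle_free; apply: subsetP hs; apply: cycleX.
have s_trans x y : exists2 g, commute g s & g x = y.
  have /porbitP[i ->] : y \in porbit zeta x by rewrite ncycle_porbit inE.
  by exists (zeta ^+ i) => //; apply: commuteX2.
have order_s : #[s] = n %/ d by rewrite orderXdiv order_ncycle.
rewrite Ind_cent_invol (card_cent_invol s_free s_trans (k := d)).
- by rewrite card_cycle_invol order_s.
- by apply/astabsP => x; rewrite !inE.
by rewrite cardsT card_ord order_s mulnC divnK.
Qed.

Lemma Ind_gcd f : Ind zeta f = Ind zeta (gcdn n f).
Proof.
have := cycleX_gcd zeta f; rewrite order_ncycle => cycle_gcd.
apply: eq_card => t; rewrite !inE; congr (_ && _).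
by rewrite -!cent1E -!cent_cycle cycle_gcd.
Qed.

End NCycle.

Theorem lemma6p2 (n d e f : nat) (zeta : {perm 'I_n}) :
  is_ncycle zeta -> 0 < n -> 0 < d -> 0 < e -> 0 < f ->
  d %| n -> coprime e (n %/ d) ->
  [/\ Ind zeta (d * e) = Ind zeta d,
      Ind zeta f = Ind zeta (gcdn n f),
      ((Ind zeta d)%:R =
        \sum_(k < (d./2).+1)
           (d`! * (n %/ d) ^ k * (2 - (n %/ d) %% 2) ^ (d - 2 * k))%N%:R
            / (2 ^ k * k`! * (d - 2 * k)`!)%N%:R :> rat)%R
    & ((Ind zeta n)%:R =
        \sum_(k < (n./2).+1)
           (n`!)%:R / (2 ^ k * k`! * (n - 2 * k)`!)%N%:R :> rat)%R].
Proof.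
move=> zn n_gt0 _ _ _ dvd_dn cop_e.
split; [| exact: Ind_gcd | |].
- rewrite (Ind_gcd zn) (Ind_gcd zn d); congr Ind.
  rewrite (gcdn_idPr dvd_dn) -{1}(divnK dvd_dn) mulnC -muln_gcdr gcdnC.
  by rewrite (eqP cop_e) muln1.
- by rewrite Ind_matching_sum // matching_sum_ratE.
rewrite Ind_matching_sum // divnn n_gt0 matching_sum_ratE.
by apply: eq_bigr => k _; rewrite !exp1n !muln1.
Qed.
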